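(* Let $E$ be a real affine space of dimension $n$ with a system of coordinates $\mathcal L=(\ell_1,\dots,\ell_n)$, and let $\mathcal P,\mathcal Q$ be Yao-Yao partitions of $E$ adapted to $\mathcal L$, with centers $x$ and $y$ respectively. Suppose that for some $k<n$: $\mathcal P(\epsilon_1,\dots,\epsilon_k)=\mathcal Q(\epsilon_1,\dots,\epsilon_k)$ for all $(\epsilon_1,\dots,\epsilon_k)\in\{-1,1\}^k$, and there exists $(\epsilon'_1,\dots,\epsilon'_{k+1})\in\{-1,1\}^{k+1}$ with $\mathcal P(\epsilon'_1,\dots,\epsilon'_{k+1})\neq\mathcal Q(\epsilon'_1,\dots,\epsilon'_{k+1})$. If $x_{k+1}\ge y_{k+1}$, then there exist $\delta_1,\dots,\delta_k\in\{-1,1\}$ such that $\mathcal P(\delta_1,\dots,\delta_k,1)$ is strictly included in $\mathcal Q(\delta_1,\dots,\delta_k,1)$.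
   Context: $\vec E$ is the vector space of $E$. A partition of $E$ is a collection of subsets covering $E$ whose distinct members have disjoint interiors. Yao-Yao partitions and their centers are defined by induction on dimension: if $E=\{x\}$, the Yao-Yao partition is $\{\{x\}\}$, with center $x$; if $\dim E=n\ge1$, $\mathcal P$ is a Yao-Yao partition of $E$ with center $x$ if there exist an affine hyperplane $F$, a vector $v\in\vec E\setminus\vec F$ (the axis) and two Yao-Yao partitions $\mathcal P_1,\mathcal P_{-1}$ of $F$ with the same center $x$ such that $\mathcal P=\{A+\mathbb R_-v: A\in\mathcal P_{-1}\}\cup\{A+\mathbb R_+v: A\in\mathcal P_1\}$. A system of coordinates is a family $(\ell_1,\dots,\ell_n)$ of affine forms such that $x\mapsto(\ell_i(x))_i$ is a bijection $E\to\mathbb R^n$; write $x_i=\ell_i(x)$, $v_i=\vec\ell_i(v)$. A Yao-Yao partition given by $F,v,x,\mathcal P_1,\mathcal P_{-1}$ is adapted to $(\ell_1,\dots,\ell_n)$ if $F=\{z: z_1=x_1\}$ and $\mathcal P_1,\mathcal P_{-1}$ are adapted to the system $(\ell_2|_F,\dots,\ell_n|_F)$ of $F$ (in dimension $0$ every Yao-Yao partition is adapted). For an adapted partition one may take the axis normalized, $v_1=1$ (replacing $v$ by $v/v_1$, and exchanging $\mathcal P_1,\mathcal P_{-1}$ if $v_1<0$). With such a normalized presentation, define $\mathcal P(\emptyset)=E$ and, for $(\epsilon_1,\dots,\epsilon_k)\in\{-1,1\}^k$, $1\le k\le n$, recursively $\mathcal P(\epsilon_1,\dots,\epsilon_k)=\mathcal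 P_{\epsilon_1}(\epsilon_2,\dots,\epsilon_k)+\mathbb R_+(\epsilon_1 v)$, where $\mathcal P_{\epsilon_1}(\cdot)$ is the analogous object for the partition $\mathcal P_{\epsilon_1}$ of $F$ (with $\mathcal P_{\epsilon_1}(\emptyset)=F$). Then $\mathcal P=\{\mathcal P(\epsilon):\epsilon\in\{-1,1\}^n\}$. *)

From HB Require Import structures.
From mathcomp Require Import all_boot all_order all_algebra.
From mathcomp Require Import boolp classical_sets reals.
Set Implicit Arguments. Unset Strict Implicit. Unset Printing Implicit Defensive.
Import Order.TTheory GRing.Theory Num.Theory.
Local Open Scope ring_scope.
Local Open Scope classical_set_scope.

(* The affine space E of dimension n is identified, through the system of
   coordinates (l_1,...,l_n), with 'rV[R]_n; coordinate l_{i+1} is entry i.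
   A hyperplane F = {z | z_1 = c} is identified with 'rV[R]_n.-1 by dropping
   the first coordinate (this identification carries the restricted system
   (l_2|_F,...,l_n|_F) to the standard one). *)

Definition cons_row (R : ringType) (n : nat) (a : R) (z : 'rV[R]_n) : 'rV[R]_n.+1 :=
  \row_(i < n.+1) match unlift ord0 i with Some j => z 0 j | None => a end.

(* Normalized presentations of Yao-Yao partitions adapted to the coordinates.
   YYS c w P1 Pm1 : F = {z | z_1 = c}, axis v = (1, w) (so v_1 = 1),
   P1, Pm1 the Yao-Yao partitions of F (adapted presentations). *)
Inductive YY (R : realType) : nat -> Type :=
| YY0 : YY R 0
| YYS (n : nat) (c : R) (w : 'rV[R]_n) (P1 Pm1 : YY R n) : YY R n.+1.

Arguments YY0 {R}.

Fixpoint center (R : realType) (n : nat) (P : YY R n) : 'rV[R]_n :=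
  match P with
  | YY0 => 0
  | YYS _ c _ P1 _ => cons_row c (center P1)
  end.

Fixpoint wfYY (R : realType) (n : nat) (P : YY R n) : Prop :=
  match P with
  | YY0 => True
  | YYS _ _ _ P1 Pm1 => [/\ center P1 = center Pm1, wfYY P1 & wfYY Pm1]
  end.

Definition sgnb (R : ringType) (b : bool) : R := if b then 1 else -1.

Fixpoint cell (R : realType) (n : nat) (P : YY R n) (e : seq bool) : set 'rV[R]_n :=
  match P with
  | YY0 => setT
  | YYS m c w P1 Pm1 =>
      match e with
      | [::] => setT
      | b :: es =>
          [set z | exists2 z' : 'rV[R]_m, cell (if b then P1 else Pm1) es z' &
                   exists2 t : R, 0 <= t &
                     z = cons_row c z' + (t * sgnb R b) *: cons_row 1 w]
      end
  end.

From HB Require Import structures.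
From mathcomp Require Import all_boot all_order all_algebra.
From mathcomp Require Import boolp classical_sets reals.
From mathcomp Require Import ring lra.
Import Order.TTheory GRing.Theory Num.Theory.
Local Open Scope ring_scope.
Local Open Scope classical_set_scope.

Set Implicit Arguments. Unset Strict Implicit. Unset Printing Implicit Defensive.

(* For k = 0 the cells P(1), Q(1) are the half-spaces
   {z_1 >= x_1} and {z_1 >= y_1}: they differ iff x_1 <> y_1, and then the
   first is strictly inside the second.
   For k + 1, equality of all cells of depth k + 1 forces P and Q to share the
   hyperplane F = {z_1 = c} and the cells of depth k of their sub-partitions;
   hence the centers of the sub-partitions, as well as the components of the
   axes along F, agree in the first k coordinates of F.  If the axes also agree
   in coordinate k + 1 of F, a differing cell of depth k + 2 comes from a
   differing cell of a sub-partition and the induction hypothesis lifts.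
   Otherwise pick the side eps with eps (v_P - v_Q)_{k+1} > 0.  On that side,
   projecting onto F along v_Q instead of v_P only increases coordinate k + 1,
   and cells of the form (d, 1) are upward closed in that coordinate among the
   points of the cell d; so P(eps, d, 1) is in Q(eps, d, 1) as soon as
   P_eps(d, 1) is in Q_eps(d, 1), which a weak form of the induction hypothesis
   provides.  The inclusion is strict because y + eps v_Q lies in
   Q(eps, d, 1) but not in P(eps, d, 1). *)

Section Rows.
Variable R : nzRingType.

Definition row_hd n (y : 'rV[R]_n.+1) : R := y 0 ord0.
Definition row_tl n (y : 'rV[R]_n.+1) : 'rV[R]_n := \row_j y 0 (lift ord0 j).

Definition eq_upto n (j : nat) (y y' : 'rV[R]_n) :=
  forall i : 'I_n, (i < j)%N -> y 0 i = y' 0 i.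

Lemma cons_row0 n (a : R) (z : 'rV[R]_n) : cons_row a z 0 ord0 = a.
Proof. by rewrite mxE unlift_none. Qed.

Lemma cons_rowS n (a : R) (z : 'rV[R]_n) j : cons_row a z 0 (lift ord0 j) = z 0 j.
Proof. by rewrite mxE liftK. Qed.

Lemma row_hd_cons n (a : R) (z : 'rV[R]_n) : row_hd (cons_row a z) = a.
Proof. exact: cons_row0. Qed.

Lemma row_tl_cons n (a : R) (z : 'rV[R]_n) : row_tl (cons_row a z) = z.
Proof. by apply/rowP => j; rewrite mxE cons_rowS. Qed.

Lemma cons_row_hd_tl n (y : 'rV[R]_n.+1) : cons_row (row_hd y) (row_tl y) = y.
Proof. by apply/rowP => i; rewrite mxE; case: unliftP => [j ->|->]; rewrite ?mxE. Qed.

Lemma cons_rowDZ n (a b r : R) (z z' : 'rV[R]_n) :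
  cons_row a z + r *: cons_row b z' = cons_row (a + r * b) (z + r *: z').
Proof. by apply/rowP => i; rewrite !mxE; case: unliftP => [j _|_]; rewrite ?mxE. Qed.

Lemma eq_upto_sym n j (y y' : 'rV[R]_n) : eq_upto j y y' -> eq_upto j y' y.
Proof. by move=> e i hi; rewrite e. Qed.

Lemma eq_uptoS n j (y y' : 'rV[R]_n.+1) :
  eq_upto j.+1 y y' <-> row_hd y = row_hd y' /\ eq_upto j (row_tl y) (row_tl y').
Proof.
split=> [e | [e0 e] i].
  by split=> [|i hi]; rewrite ?mxE; apply: e.
by case: (unliftP ord0 i) => [j' -> | ->] //; rewrite lift0 ltnS => /e; rewrite !mxE.
Qed.

End Rows.

Section Cells.
Variable R : realType.
Implicit Types (b : bool) (d es : seq bool).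

(* Projection along the axis (1, w) onto the hyperplane {z_1 = c}, read in the
   coordinates of that hyperplane. *)
Definition axis_proj n (c : R) (w : 'rV[R]_n) (z : 'rV[R]_n.+1) : 'rV[R]_n :=
  row_tl z - (row_hd z - c) *: w.

Lemma axis_proj_cons n c (w : 'rV[R]_n) u a :
  axis_proj c w (cons_row (c + u) a) = a - u *: w.
Proof. by rewrite /axis_proj row_hd_cons row_tl_cons addrAC subrr add0r. Qed.

Lemma axis_proj_hyperplane n c (w : 'rV[R]_n) a : axis_proj c w (cons_row c a) = a.
Proof. by rewrite -[in cons_row c a](addr0 c) axis_proj_cons scale0r subr0. Qed.

Lemma eq_upto_axis_proj n j c (w w' : 'rV[R]_n) (y y' : 'rV[R]_n.+1) :
  eq_upto j.+1 y y' -> eq_upto j w w' ->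
  eq_upto j (axis_proj c w y) (axis_proj c w' y').
Proof.
move=> /eq_uptoS[e0 e] ew i hi; have := e i hi; rewrite !mxE => ->.
by rewrite [row_hd y]e0 ew.
Qed.

Lemma cell_nil n (P : YY R n) : cell P [::] = setT.
Proof. by case: P. Qed.

Lemma cell_consE n c (w : 'rV[R]_n) P1 Pm1 b es z :
  cell (YYS c w P1 Pm1) (b :: es) z <->
  0 <= sgnb R b * (row_hd z - c) /\ cell (if b then P1 else Pm1) es (axis_proj c w z).
Proof.
have sgnbK t : sgnb R b * t * sgnb R b = t by case: b => /=; ring.
split=> [[z' hz' [t t0 ->]] | [hs hz]].
  rewrite cons_rowDZ mulr1 axis_proj_cons row_hd_cons addrC addKr mulrA sgnbK.
  by rewrite addrK.
exists (axis_proj c w z) => //; exists (sgnb R b * (row_hd z - c)) => //.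
by rewrite sgnbK cons_rowDZ mulr1 subrKC subrK cons_row_hd_tl.
Qed.

Lemma cell1E n c (w : 'rV[R]_n) P1 Pm1 b z :
  cell (YYS c w P1 Pm1) [:: b] z <-> 0 <= sgnb R b * (row_hd z - c).
Proof. by rewrite cell_consE cell_nil; split=> [[]|]. Qed.

Lemma cell_cons_hyperplane n c (w : 'rV[R]_n) P1 Pm1 b es a :
  cell (YYS c w P1 Pm1) (b :: es) (cons_row c a) <-> cell (if b then P1 else Pm1) es a.
Proof. by rewrite cell_consE axis_proj_hyperplane row_hd_cons subrr mulr0; split=> [[]|]. Qed.

Lemma center_cons n c (w : 'rV[R]_n) P1 Pm1 :
  center (YYS c w P1 Pm1) = cons_row c (center P1).
Proof. by []. Qed.

Lemma cell_center n (P : YY R n) es : wfYY P -> cell P es (center P).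
Proof.
elim: P es => [|m c w P1 IH1 Pm1 IHm1] // [|b es] [eqc w1 wm].
  by rewrite cell_nil.
rewrite center_cons; apply/cell_cons_hyperplane.
by case: b; [exact: IH1 | rewrite eqc; exact: IHm1].
Qed.

Lemma cell_center_axis n c (w : 'rV[R]_n) P1 Pm1 b es :
  wfYY (if b then P1 else Pm1) ->
  cell (YYS c w P1 Pm1) (b :: es)
    (cons_row (c + sgnb R b) (center (if b then P1 else Pm1) + sgnb R b *: w)).
Proof.
move=> wPb; apply/cell_consE; rewrite axis_proj_cons addrK row_hd_cons addrC addKr.
by split; [case: b {wPb} => /=; lra | exact: cell_center].
Qed.

Lemma cell_rcons_sub n (P : YY R n) d b : cell P (rcons d b) `<=` cell P d.
Proof.
elim: P d => [|m c w P1 IH1 Pm1 IHm1] // [|b' d] z; first by rewrite cell_nil.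
rewrite rcons_cons => /cell_consE[hs hz]; apply/cell_consE; split=> //.
by case: b' hs hz => _ hz; [exact: IH1 hz | exact: IHm1 hz].
Qed.

Lemma cell_eq_upto n (P : YY R n) es (y y' : 'rV[R]_n) :
  eq_upto (size es) y y' -> cell P es y -> cell P es y'.
Proof.
elim: P es y y' => [|m c w P1 IH1 Pm1 IHm1] // [|b es] y y' e; first by rewrite cell_nil.
move=> /cell_consE[hs hz]; have /eq_uptoS[e0 _] := e.
apply/cell_consE; rewrite -e0; split=> //.
have ep : eq_upto (size es) (axis_proj c w y) (axis_proj c w y').
  by apply: eq_upto_axis_proj.
by case: b {e hs} hz => hz; [exact: IH1 ep hz | exact: IHm1 ep hz].
Qed.

Definition le_at n (j : nat) (y y' : 'rV[R]_n) :=
  forall i : 'I_n, i = j :> nat -> y 0 i <= y' 0 i.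

Lemma le_atS n j (y y' : 'rV[R]_n.+1) :
  le_at j.+1 y y' <-> le_at j (row_tl y) (row_tl y').
Proof.
split=> [h i hi | h i]; first by rewrite !mxE h //= hi.
by case: (unliftP ord0 i) => [i' -> /= [/h] | -> //]; rewrite !mxE.
Qed.

Lemma eq_upto_center_cells n (P : YY R n) j y :
  (forall es, size es = j -> cell P es y) -> eq_upto j y (center P).
Proof.
elim: P j y => [|m c w P1 IH1 Pm1 IHm1] [|j] y hy //; first by case.
have hyb b : cell (YYS c w P1 Pm1) (b :: nseq j true) y by apply: hy; rewrite /= size_nseq.
have hc : row_hd y = c.
  by have /cell_consE[+ _] := hyb true; have /cell_consE[+ _] := hyb false; rewrite /=; lra.
have hP1 es : size es = j -> cell P1 es (row_tl y).
  move=> hes; have /cell_consE[_] := hy (true :: es) (congr1 S hes).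
  by rewrite /axis_proj hc subrr scale0r subr0.
by rewrite center_cons; apply/eq_uptoS; rewrite row_hd_cons row_tl_cons; split=> //; apply: IH1.
Qed.

Lemma cell_rcons_true_le n (P : YY R n) d (y y' : 'rV[R]_n) :
  eq_upto (size d) y y' -> le_at (size d) y y' ->
  cell P (rcons d true) y -> cell P d y' -> cell P (rcons d true) y'.
Proof.
elim: P d y y' => [|m c w P1 IH1 Pm1 IHm1] // [|b d] y y' e hle.
  by move=> /cell1E hy _; apply/cell1E; have := hle ord0 erefl; rewrite /row_hd /= in hy *; lra.
rewrite rcons_cons => /cell_consE[hs hz] /cell_consE[hs' hz']; apply/cell_consE; split=> //.
have /eq_uptoS[e0 _] := e.
have /le_atS hle' : le_at (size d).+1 y y' := hle.
have ep : eq_upto (size d) (axis_proj c w y) (axis_proj c w y') by apply: eq_upto_axis_proj.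
have lp : le_at (size d) (axis_proj c w y) (axis_proj c w y').
  by move=> i hi; have := hle' i hi; rewrite !mxE [row_hd y]e0 lerD2r.
by case: b {e hle hs hs'} hz hz' => hz hz'; [exact: IH1 ep lp hz hz' | exact: IHm1 ep lp hz hz'].
Qed.

Lemma center_le_at_cell_true n (P : YY R n) d y : wfYY P ->
  eq_upto (size d) y (center P) -> cell P (rcons d true) y ->
  le_at (size d) (center P) y.
Proof.
elim: P d y => [d y _ _ _ [] //|m c w P1 IH1 Pm1 IHm1] [|b d] y [eqc w1 wm] e.
  move=> /cell1E hy i /= i0; have -> : i = ord0 by apply/val_inj.
  by rewrite cons_row0; rewrite /row_hd /= in hy; lra.
rewrite rcons_cons center_cons => /cell_consE[_ hz]; apply/le_atS; rewrite row_tl_cons.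
move/eq_uptoS: e; rewrite row_hd_cons row_tl_cons => -[hc e].
have {}e : eq_upto (size d) (row_tl y) (center P1) by [].
rewrite /axis_proj hc subrr scale0r subr0 in hz.
by case: b hz => hz; [exact: IH1 w1 e hz | rewrite eqc in e *; exact: IHm1 wm e hz].
Qed.

End Cells.

Section Partitions.
Variable R : realType.
Implicit Types (b : bool) (d e es : seq bool).

Lemma YYS_inv n (Q : YY R n.+1) : exists c w Q1 Qm1, Q = YYS c w Q1 Qm1.
Proof.
refine (match Q with YY0 => I | YYS _ c w Q1 Qm1 => _ end).
by exists c, w, Q1, Qm1.
Qed.

Definition same_cells k n (P Q : YY R n) := forall e, size e = k -> cell P e = cell Q e.

Lemma same_cells_center n (P Q : YY R n) j : wfYY P ->
  same_cells j P Q -> eq_upto j (center P) (center Q).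
Proof.
by move=> wP hPQ; apply: eq_upto_center_cells => es hes; rewrite -hPQ //; apply: cell_center.
Qed.

Section ConsCells.
Variables (m : nat) (c : R) (vP vQ : 'rV[R]_m) (P1 Pm1 Q1 Qm1 : YY R m).

Lemma cons_cell_subset b es :
  cell (YYS c vP P1 Pm1) (b :: es) `<=` cell (YYS c vQ Q1 Qm1) (b :: es) ->
  cell (if b then P1 else Pm1) es `<=` cell (if b then Q1 else Qm1) es.
Proof.
by move=> hs a /(cell_cons_hyperplane c vP) /hs /(cell_cons_hyperplane c vQ).
Qed.

Lemma cons_cell_subsetE b es : eq_upto (size es) vP vQ ->
  cell (YYS c vP P1 Pm1) (b :: es) `<=` cell (YYS c vQ Q1 Qm1) (b :: es) <->
  cell (if b then P1 else Pm1) es `<=` cell (if b then Q1 else Qm1) es.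
Proof.
move=> ev; split; first exact: cons_cell_subset.
move=> hs z /cell_consE[hz0 hz]; apply/cell_consE; split=> //.
by apply: cell_eq_upto (hs _ hz); apply: eq_upto_axis_proj.
Qed.

End ConsCells.

Lemma cons_cell_eqE m c (vP vQ : 'rV[R]_m) P1 Pm1 Q1 Qm1 b es :
  eq_upto (size es) vP vQ ->
  cell (YYS c vP P1 Pm1) (b :: es) = cell (YYS c vQ Q1 Qm1) (b :: es) <->
  cell (if b then P1 else Pm1) es = cell (if b then Q1 else Qm1) es.
Proof.
move=> ev; have ev' := eq_upto_sym ev; rewrite !eqEsubset.
split=> -[h1 h2]; split.
- exact: (cons_cell_subsetE c P1 Pm1 Q1 Qm1 b ev).1 h1.
- exact: (cons_cell_subsetE c Q1 Qm1 P1 Pm1 b ev').1 h2.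
- exact: (cons_cell_subsetE c P1 Pm1 Q1 Qm1 b ev).2 h1.
- exact: (cons_cell_subsetE c Q1 Qm1 P1 Pm1 b ev').2 h2.
Qed.

Lemma same_cells_cons_sub k m c (vP vQ : 'rV[R]_m) P1 Pm1 Q1 Qm1 b :
  same_cells k.+1 (YYS c vP P1 Pm1) (YYS c vQ Q1 Qm1) ->
  same_cells k (if b then P1 else Pm1) (if b then Q1 else Qm1).
Proof.
move=> hPQ es hes; have hcons := hPQ (b :: es) (congr1 S hes).
apply/seteqP; split; [apply: (cons_cell_subset (c := c) (vP := vP) (vQ := vQ)) |
  apply: (cons_cell_subset (c := c) (vP := vQ) (vQ := vP))]; by rewrite hcons.
Qed.

Lemma same_cells_cons_hd k m cP cQ (vP vQ : 'rV[R]_m) P1 Pm1 Q1 Qm1 :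
  wfYY (YYS cP vP P1 Pm1) ->
  same_cells k.+1 (YYS cP vP P1 Pm1) (YYS cQ vQ Q1 Qm1) -> cP = cQ.
Proof.
by move=> wP /(same_cells_center wP); rewrite !center_cons => /eq_uptoS[]; rewrite !row_hd_cons.
Qed.

Lemma same_cells_axis k m c (vP vQ : 'rV[R]_m) P1 Pm1 Q1 Qm1 : wfYY P1 ->
  same_cells k.+1 (YYS c vP P1 Pm1) (YYS c vQ Q1 Qm1) -> eq_upto k vP vQ.
Proof.
move=> wP1 hPQ.
have hQ1 es : size es = k -> cell Q1 es (center P1 + vP - vQ).
  move=> hes; have := @cell_center_axis R m c vP P1 Pm1 true es wP1.
  rewrite hPQ; last by rewrite /= hes.
  by move=> /cell_consE[_]; rewrite axis_proj_cons !scale1r.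
have e1 := eq_upto_center_cells hQ1.
have e2 := same_cells_center wP1 (same_cells_cons_sub true hPQ).
by move=> i hi; have := e1 i hi; rewrite -e2 // !mxE; lra.
Qed.

Section UnequalAxes.
Variables (m : nat) (c : R) (vP vQ : 'rV[R]_m) (P1 Pm1 Q1 Qm1 : YY R m).
Variables (b : bool) (d : seq bool) (i : 'I_m).
Hypotheses (hi : i = size d :> nat) (ev : eq_upto (size d) vP vQ).
Hypothesis hv : 0 < sgnb R b * (vP 0 i - vQ 0 i).

Lemma cons_cell_rcons_true_subset :
  same_cells (size d).+1 (YYS c vP P1 Pm1) (YYS c vQ Q1 Qm1) ->
  cell (if b then P1 else Pm1) (rcons d true) `<=` cell (if b then Q1 else Qm1) (rcons d true) ->
  cell (YYS c vP P1 Pm1) (b :: rcons d true) `<=` cell (YYS c vQ Q1 Qm1) (b :: rcons d true).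
Proof.
move=> hPQ hs z /cell_consE[hz0 hz]; apply/cell_consE; split=> //.
have /cell_consE[_ hzQ] : cell (YYS c vQ Q1 Qm1) (b :: d) z.
  by rewrite -hPQ //; apply/cell_consE; split=> //; exact: cell_rcons_sub hz.
apply: cell_rcons_true_le (hs _ hz) hzQ; first exact: eq_upto_axis_proj.
move=> j hj; have -> : j = i by apply/val_inj; rewrite /= hj hi.
by rewrite !mxE; case: b hz0 hv {hs hz} => /= hz0 hb; nra.
Qed.

Lemma cons_cell_rcons_true_neq :
  wfYY (if b then P1 else Pm1) -> wfYY (if b then Q1 else Qm1) ->
  eq_upto (size d) (center (if b then P1 else Pm1)) (center (if b then Q1 else Qm1)) ->
  center (if b then Q1 else Qm1) 0 i <= center (if b then P1 else Pm1) 0 i ->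
  cell (YYS c vP P1 Pm1) (b :: rcons d true) <> cell (YYS c vQ Q1 Qm1) (b :: rcons d true).
Proof.
move=> wPb wQb ec hc heq.
have := @cell_center_axis R m c vQ Q1 Qm1 b (rcons d true) wQb.
rewrite -heq => /cell_consE[_]; rewrite axis_proj_cons => hP.
have ecP : eq_upto (size d) (center (if b then Q1 else Qm1) + sgnb R b *: vQ - sgnb R b *: vP)
    (center (if b then P1 else Pm1)).
  by move=> j hj; rewrite !mxE ev // ec // addrK.
have := center_le_at_cell_true wPb ecP hP hi; rewrite !mxE.
by case: b {wPb wQb ec hP ecP heq} hv hc => /= hb hc; lra.
Qed.

End UnequalAxes.

Lemma half_cell_strict_base n (hk : (0 < n)%N) (P Q : YY R n) :
  (exists e, (size e = 1)%N /\ cell P e <> cell Q e) ->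
  center Q 0 (Ordinal hk) <= center P 0 (Ordinal hk) ->
  exists d, (size d = 0)%N /\
    cell P (rcons d true) `<=` cell Q (rcons d true) /\
    cell P (rcons d true) <> cell Q (rcons d true).
Proof.
case: n hk P Q => // m hk P Q.
have [cP [vP [P1 [Pm1 ->]]]] := YYS_inv P.
have [cQ [vQ [Q1 [Qm1 ->]]]] := YYS_inv Q.
have -> : Ordinal hk = ord0 by apply/val_inj.
rewrite !center_cons !cons_row0 => -[e [he hne]] hc; exists [::]; split=> //.
have [b eb] : exists b, e = [:: b] by case: e {hne} he => [|b [|]] // _; exists b.
have hneq : cP != cQ.
  by apply: contra_notN hne => /eqP <-; rewrite eb; apply/seteqP; split=> z /cell1E /cell1E.
have hlt : cQ < cP by rewrite lt_neqAle eq_sym hneq hc.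
rewrite [rcons _ _]/=; split=> [z /cell1E hz | heq].
  by apply/cell1E; rewrite /= in hz *; lra.
have : cell (YYS cQ vQ Q1 Qm1) [:: true] (cons_row cQ 0).
  by apply/cell1E; rewrite row_hd_cons subrr mulr0.
by rewrite -heq => /cell1E; rewrite row_hd_cons /=; lra.
Qed.

Section InductionStep.
Variable k : nat.
Hypothesis IH : forall n (hk : (k < n)%N) (P Q : YY R n), wfYY P -> wfYY Q ->
  same_cells k P Q ->
  (exists e, size e = k.+1 /\ cell P e <> cell Q e) ->
  center Q 0 (Ordinal hk) <= center P 0 (Ordinal hk) ->
  exists d, size d = k /\
    cell P (rcons d true) `<=` cell Q (rcons d true) /\
    cell P (rcons d true) <> cell Q (rcons d true).

Lemma half_cell_subset n (hk : (k < n)%N) (P Q : YY R n) : wfYY P -> wfYY Q ->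
  same_cells k P Q -> center Q 0 (Ordinal hk) <= center P 0 (Ordinal hk) ->
  exists d, size d = k /\ cell P (rcons d true) `<=` cell Q (rcons d true).
Proof.
move=> wP wQ hPQ hc.
have [hne | heq] := pselect (exists e, size e = k.+1 /\ cell P e <> cell Q e).
  by have [d [sd [hs _]]] := IH wP wQ hPQ hne hc; exists d.
exists (nseq k true); split; first exact: size_nseq.
have -> // : cell P (rcons (nseq k true) true) = cell Q (rcons (nseq k true) true).
apply: contrapT => hne; apply: heq; exists (rcons (nseq k true) true).
by rewrite size_rcons size_nseq.
Qed.

Lemma half_cell_strict_unequal_axes m c (vP vQ : 'rV[R]_m) P1 Pm1 Q1 Qm1 b
    (hk : (k < m)%N) :
  wfYY (if b then P1 else Pm1) -> wfYY (if b then Q1 else Qm1) ->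
  same_cells k.+1 (YYS c vP P1 Pm1) (YYS c vQ Q1 Qm1) -> eq_upto k vP vQ ->
  center (if b then Q1 else Qm1) 0 (Ordinal hk) <= center (if b then P1 else Pm1) 0 (Ordinal hk) ->
  0 < sgnb R b * (vP 0 (Ordinal hk) - vQ 0 (Ordinal hk)) ->
  exists d, size d = k.+1 /\
    cell (YYS c vP P1 Pm1) (rcons d true) `<=` cell (YYS c vQ Q1 Qm1) (rcons d true) /\
    cell (YYS c vP P1 Pm1) (rcons d true) <> cell (YYS c vQ Q1 Qm1) (rcons d true).
Proof.
move=> wPb wQb hPQ ev hc hv.
have hsub := same_cells_cons_sub b hPQ.
have [d [sd hs]] := half_cell_subset wPb wQb hsub hc.
have ec := same_cells_center wPb hsub.
rewrite -sd in ev ec hPQ; have hi : Ordinal hk = size d :> nat by rewrite sd.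
exists (b :: d); rewrite rcons_cons /= sd; split=> //; split.
  exact: cons_cell_rcons_true_subset hi ev hv hPQ hs.
exact: cons_cell_rcons_true_neq hi ev hv wPb wQb ec hc.
Qed.

Lemma half_cell_strict_equal_axes m c (vP vQ : 'rV[R]_m) P1 Pm1 Q1 Qm1 b e
    (hk : (k < m)%N) :
  wfYY (if b then P1 else Pm1) -> wfYY (if b then Q1 else Qm1) ->
  same_cells k.+1 (YYS c vP P1 Pm1) (YYS c vQ Q1 Qm1) -> eq_upto k.+1 vP vQ ->
  center (if b then Q1 else Qm1) 0 (Ordinal hk) <= center (if b then P1 else Pm1) 0 (Ordinal hk) ->
  size e = k.+1 -> cell (YYS c vP P1 Pm1) (b :: e) <> cell (YYS c vQ Q1 Qm1) (b :: e) ->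
  exists d, size d = k.+1 /\
    cell (YYS c vP P1 Pm1) (rcons d true) `<=` cell (YYS c vQ Q1 Qm1) (rcons d true) /\
    cell (YYS c vP P1 Pm1) (rcons d true) <> cell (YYS c vQ Q1 Qm1) (rcons d true).
Proof.
move=> wPb wQb hPQ ev hc se hne.
have ev_e : eq_upto (size e) vP vQ by rewrite se.
have [|d [sd [hs hne_d]]] := IH wPb wQb (same_cells_cons_sub b hPQ) _ hc.
  by exists e; split=> // /(cons_cell_eqE c P1 Pm1 Q1 Qm1 b ev_e).
have ev_d : eq_upto (size (rcons d true)) vP vQ by rewrite size_rcons sd.
exists (b :: d); rewrite rcons_cons /= sd; split=> //; split.
  exact/(cons_cell_subsetE c P1 Pm1 Q1 Qm1 b ev_d).
by move/(cons_cell_eqE c P1 Pm1 Q1 Qm1 b ev_d).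
Qed.

Lemma half_cell_strict_step n (hk : (k.+1 < n)%N) (P Q : YY R n) :
  wfYY P -> wfYY Q -> same_cells k.+1 P Q ->
  (exists e, size e = k.+2 /\ cell P e <> cell Q e) ->
  center Q 0 (Ordinal hk) <= center P 0 (Ordinal hk) ->
  exists d, size d = k.+1 /\
    cell P (rcons d true) `<=` cell Q (rcons d true) /\
    cell P (rcons d true) <> cell Q (rcons d true).
Proof.
case: n hk P Q => // m hk P Q.
have [cP [vP [P1 [Pm1 ->]]]] := YYS_inv P.
have [cQ [vQ [Q1 [Qm1 ->]]]] := YYS_inv Q.
move=> wP wQ hPQ [[|b e] [// se hne]]; have hk' : (k < m)%N := hk.
have -> : Ordinal hk = lift ord0 (Ordinal hk') by apply/val_inj.
rewrite !center_cons !cons_rowS; set i := Ordinal hk' => hc.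
have ecc := same_cells_cons_hd wP hPQ; subst cQ.
case: wP wQ => ePc wP1 wPm1 [eQc wQ1 wQm1].
have wPb b' : wfYY (if b' then P1 else Pm1) by case: b'.
have wQb b' : wfYY (if b' then Q1 else Qm1) by case: b'.
have hcb b' : center (if b' then Q1 else Qm1) 0 i <= center (if b' then P1 else Pm1) 0 i.
  by case: b'; rewrite // -ePc -eQc.
have ev : eq_upto k vP vQ := same_cells_axis wP1 hPQ.
case: (ltgtP (vQ 0 i) (vP 0 i)) => hv.
- apply: (half_cell_strict_unequal_axes (b := true) (hk := hk') (wPb true) (wQb true)
    hPQ ev (hcb true)).
  by rewrite /=; lra.
- apply: (half_cell_strict_unequal_axes (b := false) (hk := hk') (wPb false) (wQb false)
    hPQ ev (hcb false)).
  by rewrite /=; lra.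
have ev' : eq_upto k.+1 vP vQ.
  move=> j; rewrite ltnS leq_eqVlt => /orP[/eqP ej | /ev //].
  by have -> : j = i by apply/val_inj.
exact: (half_cell_strict_equal_axes (b := b) (hk := hk') (wPb b) (wQb b) hPQ ev' (hcb b)
  (succn_inj se) hne).
Qed.

End InductionStep.

End Partitions.

Theorem lemma9 (R : realType) (n k : nat) (hk : (k < n)%N) (P Q : YY R n) :
  wfYY P -> wfYY Q ->
  (forall e : seq bool, size e = k -> cell P e = cell Q e) ->
  (exists e : seq bool, size e = k.+1 /\ cell P e <> cell Q e) ->
  center Q 0 (Ordinal hk) <= center P 0 (Ordinal hk) ->
  exists d : seq bool, size d = k /\
    cell P (rcons d true) `<=` cell Q (rcons d true) /\
    cell P (rcons d true) <> cell Q (rcons d true).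
Proof.
elim: k n hk P Q => [|k IH] n hk P Q wP wQ hPQ; first exact: half_cell_strict_base.
exact: (half_cell_strict_step IH wP wQ hPQ).
Qed.
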